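(* Let $j>0$, $\delta>0$ and $u,v\in\mathcal U_\delta$. Then $$F\big(0;|K^{(\delta)}u-K^{(\delta)}v|\big)\le F\big(0;|u-v|\big),\qquad F\big(0;|K^{(\delta)}u-u|\big)\le 2j\delta.$$
   Context: For a positive measure $\mu$ on $[0,1]$, $F(r;\mu)=\mu([r,1])$. $\mathcal U$ = measures $u=c_uD_0+\rho_u(r)dr$ with $c_u\ge0$, $\rho_u\in L^\infty([0,1],\mathbb R_+)$, $D_0$ the Dirac mass at $0$. For $u,v\in\mathcal U$, $|u-v|=|c_u-c_v|D_0+|\rho_u-\rho_v|$ (so $F(0;|u-v|)=|c_u-c_v|+\int_0^1|\rho_u-\rho_v|$). $\mathcal U_\delta=\{u\in\mathcal U:\int_0^1\rho_u>j\delta\}$, and $K^{(\delta)}u=j\delta D_0+\mathbf 1_{[0,R_\delta(u)]}u$ with $R_\delta(u)=\inf\{r:F(r;u)=j\delta\}$. *)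

From HB Require Import structures.
From mathcomp Require Import all_boot all_order all_algebra.
From mathcomp Require Import all_classical all_reals all_analysis.
Set Implicit Arguments. Unset Strict Implicit. Unset Printing Implicit Defensive.
Import Order.TTheory GRing.Theory Num.Theory.
Import numFieldNormedType.Exports.
Local Open Scope classical_set_scope.
Local Open Scope ring_scope.

(* An element u = c_u D_0 + rho_u(r) dr of the class U is represented by the
   pair (c_u, rho_u). *)
Definition I01 (R : realType) : set R := `[(0 : R), 1]%classic.

Definition umeasure (R : realType) := (R * (R -> R))%type.

Definition inU (R : realType) (u : umeasure R) : Prop :=
  0 <= u.1 /\ measurable_fun (@I01 R) u.2 /\
  (forall x, (@I01 R) x -> 0 <= u.2 x) /\
  (exists M : R, forall x, (@I01 R) x -> u.2 x <= M).

Definition umeas (R : realType) (u : umeasure R) (A : set R) : \bar R :=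
  ((u.1)%:E * \d_(0%R : R) A + \int[@lebesgue_measure R]_(x in A `&` (@I01 R)) (u.2 x)%:E)%E.

Definition F (R : realType) (r : R) (mu : set R -> \bar R) : \bar R :=
  mu `[r, 1]%classic.

Definition absd (R : realType) (u v : umeasure R) : umeasure R :=
  (`|u.1 - v.1|, fun x => `|u.2 x - v.2 x|).

Definition Udelta (R : realType) (j delta : R) (u : umeasure R) : Prop :=
  inU u /\ ((j * delta)%:E < \int[@lebesgue_measure R]_(x in (@I01 R)) (u.2 x)%:E)%E.

Definition Rdelta (R : realType) (j delta : R) (u : umeasure R) : R :=
  inf [set r : R | F r (umeas u) = (j * delta)%:E].

Definition Kdelta (R : realType) (j delta : R) (u : umeasure R) : umeasure R :=
  (j * delta + \1_(`[0, Rdelta j delta u]%classic) 0 * u.1,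
   fun x => \1_(`[0, Rdelta j delta u]%classic) x * u.2 x).

From HB Require Import structures.
From mathcomp Require Import all_boot all_order all_algebra.
From mathcomp Require Import all_classical all_reals all_analysis.
From mathcomp Require Import lra measurable_realfun.
Set Implicit Arguments. Unset Strict Implicit. Unset Printing Implicit Defensive.
Import Order.TTheory GRing.Theory Num.Theory.
Import numFieldNormedType.Exports.
Local Open Scope classical_set_scope.
Local Open Scope ring_scope.

(* Write a = j delta.  For r > 0, F(r; u) is the tail integral of rho_u over [r, 1];
   for a bounded density this tail is Lipschitz, hence continuous, so by the
   intermediate value theorem the level set {F(r; u) = a} is a nonempty closed set of
   positive reals and contains its infimum R_delta(u).  Thus the part of rho_u beyond
   R_delta(u) has mass exactly a, and K u moves that mass onto the atom at 0: this
   gives F(0; |K u - u|) = a + a.  For the contraction, assume R_delta(u) <= R_delta(v);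
   pointwise
     |1_{x <= R_u} rho_u - 1_{x <= R_v} rho_v| + 1_{x > R_v} rho_v
       <= |rho_u - rho_v| + 1_{x > R_u} rho_u,
   and both tails integrate to a, so they cancel, while the atoms of K u and K v
   differ by c_u - c_v. *)

Lemma klipschitz_continuous (K : realFieldType) (g : K -> K) (k : K) :
  0 <= k -> (forall r s, `|g r - g s| <= k * `|r - s|) -> continuous g.
Proof.
move=> k0 gk x; apply/cvgrPdist_le => e e0; apply/nbhs_normP.
have k1 : 0 < k + 1 by rewrite ltr_wpDl.
exists (e / (k + 1)); first by rewrite /= divr_gt0.
move=> y /= xy; apply: (le_trans (gk x y)).
have : k * `|x - y| <= k * (e / (k + 1)) by rewrite ler_wpM2l// ltW.
move/le_trans; apply; rewrite mulrA ler_pdivrMr//; nra.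
Qed.

Lemma truncate_dist_le (K : realDomainType) (b1 b2 : bool) (r1 r2 : K) :
  b1 ==> b2 -> 0 <= r1 -> 0 <= r2 ->
  `|b1%:R * r1 - b2%:R * r2| + (1 - b2%:R) * r2 <= `|r1 - r2| + (1 - b1%:R) * r1.
Proof.
move=> b12 r10 r20; have r2_le : r2 <= `|r1 - r2| + r1.
  by rewrite -lerBlDr distrC ler_norm.
case: b1 b12; case: b2 => //= _;
  by rewrite ?(subrr, subr0, sub0r, mul1r, mul0r, normrN, normr0, ger0_norm r20, add0r, addr0).
Qed.

Section unit_interval_integral.
Variable R : realType.
Local Notation mu := (@lebesgue_measure R).
Local Notation D := (@I01 R).

Definition int01 (f : R -> R) : \bar R := (\int[mu]_(x in D) (f x)%:E)%E.

Lemma measurable_I01 : measurable D. Proof. exact: measurable_itv. Qed.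

Lemma I01E x : D x <-> 0 <= x <= 1.
Proof. by rewrite /I01 /= in_itv. Qed.

Lemma indic_itvE (a b x : R) :
  \1_`[a, b] x = ((a <= x) && (x <= b))%:R :> R.
Proof. by rewrite indicE mem_setE in_itv. Qed.

Lemma measurable_indic_itv (a b : R) : measurable_fun D (\1_`[a, b] : R -> R).
Proof. by apply: measurable_indic; exact: measurable_itv. Qed.

Lemma int01D (f g : R -> R) : measurable_fun D f -> measurable_fun D g ->
  (forall x, D x -> 0 <= f x) -> (forall x, D x -> 0 <= g x) ->
  int01 (fun x => f x + g x) = (int01 f + int01 g)%E.
Proof.
move=> mf mg f0 g0; rewrite /int01 -ge0_integralD //.
- exact: measurable_I01.
- exact/measurable_EFinP.
- exact/measurable_EFinP.
Qed.

Lemma le_int01 (f g : R -> R) : measurable_fun D f -> measurable_fun D g ->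
  (forall x, D x -> 0 <= f x) -> (forall x, D x -> f x <= g x) ->
  (int01 f <= int01 g)%E.
Proof.
move=> mf mg f0 fg; apply: ge0_le_integral.
- exact: measurable_I01.
- by move=> x Dx; rewrite lee_fin f0.
- exact/measurable_EFinP.
- exact/measurable_EFinP.
- by move=> x Dx; rewrite lee_fin fg.
Qed.

Lemma int01_ge0 (f : R -> R) : (forall x, D x -> 0 <= f x) -> (0 <= int01 f)%E.
Proof. by move=> f0; apply: integral_ge0 => x Dx; rewrite lee_fin f0. Qed.

Lemma eq_int01 (f g : R -> R) : {in D, f =1 g} -> int01 f = int01 g.
Proof. by move=> fg; apply: eq_integral => x Dx; rewrite fg. Qed.

Lemma int01_scaled_indic_itv (a b c : R) : a <= b -> 0 <= c ->
  (int01 (fun x => c * \1_`[a, b] x)%R <= (c * (b - a))%:E)%E.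
Proof.
move=> ab c0; rewrite /int01.
under eq_integral do rewrite EFinM.
rewrite ge0_integralZl_EFin//; last 2 first.
- exact: measurable_I01.
- by apply/measurable_EFinP; apply: measurable_indic; exact: measurable_itv.
rewrite integral_indic; [|exact: measurable_I01|exact: measurable_itv].
rewrite EFinM; apply: lee_wpmul2l; first by rewrite lee_fin.
apply: (le_trans (measureIl _ _ _)); [exact: measurable_itv|exact: measurable_I01|].
have /= -> := lebesgue_measure_itv `[a, b].
by case: ifPn => // _; rewrite lee_fin subr_ge0.
Qed.

Lemma measurable_indic_itv_mul (a b : R) (f : R -> R) : measurable_fun D f ->
  measurable_fun D (fun x => \1_`[a, b] x * f x).
Proof. by move=> mf; apply: measurable_funM => //; exact: measurable_indic_itv. Qed.

Definition beyond (t : R) (f : R -> R) (x : R) : R := (1 - \1_`[0, t] x) * f x.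

Lemma measurable_beyond (t : R) (f : R -> R) :
  measurable_fun D f -> measurable_fun D (beyond t f).
Proof.
move=> mf; apply: measurable_funM => //.
by apply: measurable_funB => //; exact: measurable_indic_itv.
Qed.

Lemma beyond_ge0 (t : R) (f : R -> R) (x : R) : 0 <= f x -> 0 <= beyond t f x.
Proof. by move=> f0; rewrite mulr_ge0// indic_itvE subr_ge0 lern1 leq_b1. Qed.

Section tail_integral.
Variables (rho : R -> R) (M : R).
Hypothesis measurable_rho : measurable_fun D rho.
Hypothesis rho_ge0 : forall x, D x -> 0 <= rho x.
Hypothesis rho_le : forall x, D x -> rho x <= M.

Let M_ge0 : 0 <= M.
Proof.
have D0 : D 0 by apply/I01E; rewrite lexx ler01.
exact: le_trans (rho_ge0 D0) (rho_le D0).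
Qed.

Let indic_rho_ge0 (a b x : R) : D x -> 0 <= \1_`[a, b] x * rho x.
Proof. by move=> Dx; rewrite mulr_ge0 ?rho_ge0// indic_itvE. Qed.

Definition tail_int (r : R) : \bar R := int01 (fun x => \1_`[r, 1] x * rho x).

Lemma int01_indic_itv_le (a b : R) : a <= b ->
  (int01 (fun x => \1_`[a, b] x * rho x)%R <= (M * (b - a))%:E)%E.
Proof.
move=> ab; apply: le_trans (int01_scaled_indic_itv ab M_ge0); apply: le_int01.
- exact: measurable_indic_itv_mul.
- by apply: measurable_funM => //; exact: measurable_indic_itv.
- by move=> x Dx; exact: indic_rho_ge0.
- by move=> x Dx; rewrite [leRHS]mulrC; apply: ler_wpM2l; rewrite ?rho_le// indic_itvE.
Qed.

Lemma tail_int_le0 (r : R) : r <= 0 -> tail_int r = int01 rho.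
Proof.
move=> r0; apply: eq_int01 => x; rewrite inE => /I01E /andP[x0 x1].
by rewrite indic_itvE (le_trans r0 x0) x1 mul1r.
Qed.

Lemma int01_fin_num : int01 rho \is a fin_num.
Proof.
rewrite -(tail_int_le0 (lexx 0)) ge0_fin_numE; last by apply: int01_ge0 => x; exact: indic_rho_ge0.
by apply: le_lt_trans (int01_indic_itv_le ler01) _; rewrite ltry.
Qed.

Lemma tail_int_fin_num (r : R) : tail_int r \is a fin_num.
Proof.
rewrite ge0_fin_numE; last by apply: int01_ge0 => x; exact: indic_rho_ge0.
apply: le_lt_trans (_ : int01 rho < +oo)%E; last by rewrite ltey_eq int01_fin_num.
apply: le_int01 => //.
- exact: measurable_indic_itv_mul.
- by move=> x; exact: indic_rho_ge0.
- by move=> x Dx; rewrite ler_piMl ?rho_ge0// indic_itvE lern1 leq_b1.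
Qed.

Definition tail (r : R) : R := fine (tail_int r).

Lemma tail_intE (r : R) : tail_int r = (tail r)%:E.
Proof. by rewrite fineK// tail_int_fin_num. Qed.

Lemma tail_gt1 (r : R) : 1 < r -> tail r = 0.
Proof.
move=> r1; rewrite /tail /tail_int /int01 integral0_eq// => x /I01E /andP[_ x1].
by rewrite indic_itvE (lt_geF (le_lt_trans x1 r1)) mul0r.
Qed.

Lemma tail_int_le_shift (r s : R) : r <= s ->
  (tail_int s <= tail_int r <= tail_int s + (M * (s - r))%:E)%E.
Proof.
move=> rs; apply/andP; split.
  apply: le_int01 => //; try exact: measurable_indic_itv_mul.
    by move=> x; exact: indic_rho_ge0.
  move=> x Dx; rewrite ler_wpM2r ?rho_ge0// !indic_itvE.
  by case: (boolP (s <= x)) => // sx; rewrite (le_trans rs sx).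
apply: le_trans (leeD2l _ (int01_indic_itv_le rs)).
rewrite -int01D //; try exact: measurable_indic_itv_mul; last 2 first.
- by move=> x; exact: indic_rho_ge0.
- by move=> x; exact: indic_rho_ge0.
apply: le_int01 => //; try exact: measurable_indic_itv_mul.
- by apply: measurable_funD; exact: measurable_indic_itv_mul.
- by move=> x; exact: indic_rho_ge0.
move=> x Dx; rewrite -mulrDl ler_wpM2r ?rho_ge0// !indic_itvE.
by case: (leP r x); case: (leP s x); case: (leP x 1); case: (leP x s) => //=; lra.
Qed.

Lemma tail_lipschitz (r s : R) : `|tail r - tail s| <= M * `|r - s|.
Proof.
wlog rs : r s / r <= s.
  move=> W; have [|/ltW sr] := leP r s; first exact: W.
  by rewrite distrC [`|r - s|]distrC; exact: W.
rewrite [`|r - s|]distrC [`|s - r|]ger0_norm ?subr_ge0//.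
move: (tail_int_le_shift rs); rewrite !tail_intE -EFinD !lee_fin => /andP[sr rs'].
by rewrite ger0_norm ?subr_ge0// lerBlDl.
Qed.

Lemma continuous_tail : continuous tail.
Proof. exact: klipschitz_continuous M_ge0 tail_lipschitz. Qed.

Lemma tail_int_split (r : R) : 0 <= r -> tail_int r = int01 (beyond r rho).
Proof.
move=> r0; have atom0 : int01 (fun x => \1_`[r, r] x * rho x)%R = 0%E.
  apply/eqP; rewrite eq_le; apply/andP; split.
    by have := int01_indic_itv_le (lexx r); rewrite subrr mulr0.
  by apply: int01_ge0 => x; exact: indic_rho_ge0.
rewrite -[RHS]adde0 -atom0 -int01D //; last 4 first.
- exact: measurable_beyond.
- exact: measurable_indic_itv_mul.
- by move=> x Dx; rewrite beyond_ge0 ?rho_ge0.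
- by move=> x; exact: indic_rho_ge0.
apply: eq_int01 => x; rewrite inE => /I01E /andP[x0 x1].
rewrite -mulrDl !indic_itvE x0 x1 /=; congr (_ * _).
by case: ltgtP; rewrite /= ?subrr ?subr0 ?add0r ?addr0.
Qed.

End tail_integral.

Lemma F_tail_int (w : umeasure R) (r : R) :
  F r (umeas w) = ((w.1 * \1_`[r, 1] 0)%:E + tail_int w.2 r)%E.
Proof.
rewrite /F /umeas diracE indicE -EFinM; congr (_ + _)%E.
rewrite integral_mkcondl; apply: eq_integral => x _.
by rewrite patchE indicE; case: ifP; rewrite ?mul1r ?mul0r.
Qed.

Lemma F0E (w : umeasure R) : F 0 (umeas w) = ((w.1)%:E + int01 w.2)%E.
Proof. by rewrite F_tail_int indic_itvE lexx ler01 mulr1 tail_int_le0. Qed.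

Lemma F_gt0 (w : umeasure R) (r : R) : 0 < r -> F r (umeas w) = tail_int w.2 r.
Proof. by move=> r0; rewrite F_tail_int indic_itvE (lt_geF r0) mulr0 add0e. Qed.

Lemma dist_truncate_beyond (t : R) (f : R -> R) (x : R) :
  0 <= f x -> `|\1_`[0, t] x * f x - f x| = beyond t f x.
Proof.
move=> f0; rewrite -{2}[f x]mul1r -mulrBl normrM distrC (ger0_norm f0).
by rewrite ger0_norm// indic_itvE subr_ge0 lern1 leq_b1.
Qed.

Lemma int01_truncate_dist_le (f g : R -> R) (s t : R) :
  measurable_fun D f -> measurable_fun D g ->
  (forall x, D x -> 0 <= f x) -> (forall x, D x -> 0 <= g x) ->
  int01 (beyond s f) = int01 (beyond t g) -> int01 (beyond s f) \is a fin_num ->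
  (int01 (fun x => `|\1_`[0, s] x * f x - \1_`[0, t] x * g x|)%R
    <= int01 (fun x => `|f x - g x|)%R)%E.
Proof.
wlog st : f g s t / s <= t.
  move=> W mf mg f0 g0 eq_beyond fin; have [st|/ltW ts] := leP s t; first exact: W.
  rewrite (eq_int01 (g := fun x => `|\1_`[0, t] x * g x - \1_`[0, s] x * f x|)) => [|x _].
    rewrite (eq_int01 (f := fun x => `|f x - g x|) (g := fun x => `|g x - f x|)) => [|x _].
      by apply: (W g f t s) => //; rewrite -eq_beyond.
    exact: distrC.
  exact: distrC.
move=> mf mg f0 g0 eq_beyond fin.
have measurable_dist (h k : R -> R) : measurable_fun D h -> measurable_fun D k ->
    measurable_fun D (fun x => `|h x - k x|).
  by move=> mh mk; apply: measurableT_comp => //; exact: measurable_funB.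
have [mtf mtg] := (measurable_indic_itv_mul 0 s mf, measurable_indic_itv_mul 0 t mg).
rewrite -(leeD2rE _ _ fin) {1}eq_beyond -!int01D //; last 6 first.
- exact: measurable_dist.
- exact: measurable_beyond.
- by move=> x Dx; apply: beyond_ge0; rewrite ?f0 ?g0.
- exact: measurable_dist.
- exact: measurable_beyond.
- by move=> x Dx; apply: beyond_ge0; rewrite ?f0 ?g0.
apply: le_int01.
- by apply: measurable_funD; [exact: measurable_dist|exact: measurable_beyond].
- by apply: measurable_funD; [exact: measurable_dist|exact: measurable_beyond].
- by move=> x Dx; rewrite addr_ge0// beyond_ge0 ?g0.
move=> x Dx; have /I01E /andP[x0 _] := Dx; rewrite /beyond !indic_itvE x0 /=.
by apply: truncate_dist_le; rewrite ?f0 ?g0//; apply/implyP => /le_trans; apply.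
Qed.

Section truncation_radius.
Variables (j delta M : R) (u : umeasure R).
Hypothesis jdelta_gt0 : 0 < j * delta.
Hypothesis atom_ge0 : 0 <= u.1.
Hypothesis measurable_rho : measurable_fun D u.2.
Hypothesis rho_ge0 : forall x, D x -> 0 <= u.2 x.
Hypothesis rho_le : forall x, D x -> u.2 x <= M.
Hypothesis int01_rho_gt : ((j * delta)%:E < int01 u.2)%E.

Local Notation rho := u.2.
Local Notation a := (j * delta).

Let tail_intE := tail_intE measurable_rho rho_ge0 rho_le.

Lemma tail_le0_gt (r : R) : r <= 0 -> a < tail rho r.
Proof. by move=> r0; rewrite -lte_fin -tail_intE tail_int_le0. Qed.

Lemma Rdelta_level_set :
  [set r | F r (umeas u) = a%:E] = tail rho @^-1` [set a].
Proof.
apply/seteqP; split => r /=; have [r0|r_gt0] := leP r 0.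
- rewrite F_tail_int tail_int_le0// => Fa.
  have : (int01 rho <= a%:E)%E.
    by rewrite -Fa; apply: leeDr; rewrite lee_fin mulr_ge0// indic_itvE.
  by rewrite leNgt int01_rho_gt.
- by rewrite F_gt0// tail_intE => -[].
- by move=> tail_a; move: (tail_le0_gt r0); rewrite tail_a ltxx.
- by rewrite F_gt0// tail_intE => ->.
Qed.

Lemma tail_level_set_nonempty : exists r, tail rho r = a.
Proof.
have cont : {within `[0, 2], continuous (tail rho)}.
  exact/continuous_subspaceT/(continuous_tail measurable_rho rho_ge0 rho_le).
have bounds : Num.min (tail rho 0) (tail rho 2) <= a <= Num.max (tail rho 0) (tail rho 2).
  have -> : tail rho 2 = 0 by rewrite tail_gt1 // ltr1n.
  by rewrite ge_min le_max (ltW (tail_le0_gt (lexx 0))) (ltW jdelta_gt0) orbT.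
by have [c _ tail_c] := IVT (ler0n _ 2) cont bounds; exists c.
Qed.

Lemma lbound_tail_level_set : lbound (tail rho @^-1` [set a]) 0.
Proof.
move=> r /= tail_a; rewrite leNgt; apply/negP => /ltW/tail_le0_gt.
by rewrite tail_a ltxx.
Qed.

Lemma RdeltaE : Rdelta j delta u = inf (tail rho @^-1` [set a]).
Proof. by rewrite /Rdelta Rdelta_level_set. Qed.

Lemma Rdelta_ge0 : 0 <= Rdelta j delta u.
Proof. by rewrite RdeltaE; apply: lb_le_inf lbound_tail_level_set; exact: tail_level_set_nonempty. Qed.

Lemma tail_Rdelta : tail rho (Rdelta j delta u) = a.
Proof.
set Z := tail rho @^-1` [set a].
have Z_ne : Z !=set0 by have [r ?] := tail_level_set_nonempty; exists r.
have Z_closed : closed Z.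
  apply: preimage_closed; last exact: closed_eq.
  by move=> x _; exact: (continuous_tail measurable_rho rho_ge0 rho_le).
rewrite RdeltaE; apply: (itv_closed_infimums Z_ne Z_closed); split.
  by apply: ge_inf; exists 0; exact: lbound_tail_level_set.
by move=> y; exact: lb_le_inf.
Qed.

Lemma int01_beyond_Rdelta :
  int01 (beyond (Rdelta j delta u) rho) = a%:E.
Proof.
by rewrite -(tail_int_split measurable_rho rho_ge0 rho_le Rdelta_ge0) tail_intE tail_Rdelta.
Qed.

End truncation_radius.

Lemma F0_absd (w1 w2 : umeasure R) :
  F 0 (umeas (absd w1 w2)) = (`|w1.1 - w2.1|%:E + int01 (fun x => `|w1.2 x - w2.2 x|)%R)%E.
Proof. exact: F0E. Qed.

Lemma Kdelta_atom (j delta : R) (u : umeasure R) :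
  0 <= Rdelta j delta u -> (Kdelta j delta u).1 = j * delta + u.1.
Proof. by move=> R0; rewrite /Kdelta /= indic_itvE lexx R0 mul1r. Qed.

Lemma Udelta_Rdelta (j delta : R) (u : umeasure R) : 0 < j * delta -> Udelta j delta u ->
  0 <= Rdelta j delta u /\ int01 (beyond (Rdelta j delta u) u.2) = (j * delta)%:E.
Proof.
move=> jdelta_gt0 [[atom_ge0 [mrho [rho_ge0 [M rho_le]]]] int_gt].
split; first exact: (Rdelta_ge0 jdelta_gt0 atom_ge0 mrho rho_ge0 rho_le int_gt).
exact: (int01_beyond_Rdelta jdelta_gt0 atom_ge0 mrho rho_ge0 rho_le int_gt).
Qed.

End unit_interval_integral.

Theorem mainTheorem12 (R : realType) (j delta : R) (u v : umeasure R) :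
  0 < j -> 0 < delta -> Udelta j delta u -> Udelta j delta v ->
  (F 0 (umeas (absd (Kdelta j delta u) (Kdelta j delta v)))
     <= F 0 (umeas (absd u v)))%E /\
  (F 0 (umeas (absd (Kdelta j delta u) u)) <= (2 * j * delta)%:E)%E.
Proof.
move=> j_gt0 delta_gt0 Uu Uv; have jdelta_gt0 : 0 < j * delta by rewrite mulr_gt0.
have [[_ [mu [pu _]]] _] := Uu; have [[_ [mv [pv _]]] _] := Uv.
have [Ru_ge0 beyond_u] := Udelta_Rdelta jdelta_gt0 Uu.
have [Rv_ge0 beyond_v] := Udelta_Rdelta jdelta_gt0 Uv.
rewrite !F0_absd !Kdelta_atom //; split.
  rewrite opprD addrACA subrr add0r leeD2l //.
  by apply: int01_truncate_dist_le => //; rewrite beyond_u ?beyond_v.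
rewrite addrK (ger0_norm (ltW jdelta_gt0)) (@eq_int01 _ _ (beyond (Rdelta j delta u) u.2)) => [|x Dx].
  by rewrite beyond_u -EFinD lee_fin -mulrA mulr2n mulrDl !mul1r.
by move: Dx; rewrite inE => /pu; exact: dist_truncate_beyond.
Qed.
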